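(* Let $E$ be a finite set with $m=|E|\ge1$ and let $\mu$ be an exchangeable measure over the subsets of $E$, i.e. $\mu(F)=c(|F|)$ for some non-negative numbers $c(0),\dots,c(m)$. Then $\mu$ is cavity-monotone if and only if (1) $c$ is log-concave, i.e. $c(k)^2\ge c(k-1)c(k+1)$ for all $0<k<m$, and (2) the support $\{0\le k\le m: c(k)>0\}$ is an interval containing $0$ and $1$. In particular, for every $b\ge1$ the measure $\mu(F)=\mathbf 1(|F|\le b)$ is cavity-monotone.
   Context: Let $E$ be a finite set. A measure over the subsets of $E$ is a function $\mu:2^E\to[0,\infty)$. For $\mathbf w\in(0,\infty)^E$, $\mathbb P^{\mathbf w}_\mu$ is the law of a random subset $\mathcal F\subseteq E$ with $\mathbb P^{\mathbf w}_\mu(\mathcal F=F)=\mu(F)\prod_{e\in F}w_e/Z(\mathbf w)$, where $Z(\mathbf w)=\sum_{F}\mu(F)\prod_{e\in F}w_e$. $\mu$ is Rayleigh if for all $\mathbf w\in(0,\infty)^E$ and all $e\neq f$ in $E$, $\mathbb P^{\mathbf w}_\mu(e\in\mathcal F,f\in\mathcal F)\le\mathbb P^{\mathbf w}_\mu(e\in\mathcal F)\mathbb P^{\mathbf w}_\mu(f\in\mathcal F)$. $\mu$ is size-increasing if for all $\mathbf w\in(0,\infty)^E$ and all $e\in E$, $\mathbb E^{\mathbf w}_\mu[|\mathcal F|\mathbf 1_{e\in\mathcal F}]>\mathbb E^{\mathbf w}_\mu[|\mathcal F|]\,\mathbb P^{\mathbf w}_\mu(e\in\mathcal F)$. $\mu$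 is cavity-monotone if $\mu(\emptyset)>0$ and $\mu$ is Rayleigh and size-increasing. *)

From HB Require Import structures.
From mathcomp Require Import all_boot all_order all_algebra.
Set Implicit Arguments. Unset Strict Implicit. Unset Printing Implicit Defensive.
Import Order.TTheory GRing.Theory Num.Theory.
Local Open Scope ring_scope.

Section Measures.
Variables (R : rcfType) (E : finType).

(* A measure over the subsets of E: mu : 2^E -> [0,oo) (nonnegativity is
   assumed separately where needed). *)
Definition weight (w : E -> R) (F : {set E}) : R := \prod_(e in F) w e.

Definition partZ (mu : {set E} -> R) (w : E -> R) : R :=
  \sum_(F : {set E}) mu F * weight w F.

Definition prob (mu : {set E} -> R) (w : E -> R) (P : pred {set E}) : R :=
  (\sum_(F : {set E} | P F) mu F * weight w F) / partZ mu w.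

Definition expect (mu : {set E} -> R) (w : E -> R) (f : {set E} -> R) : R :=
  (\sum_(F : {set E}) mu F * weight w F * f F) / partZ mu w.

Definition posw (w : E -> R) : Prop := forall e, 0 < w e.

Definition rayleigh (mu : {set E} -> R) : Prop :=
  forall w, posw w -> forall e f : E, e != f ->
    prob mu w (fun F => (e \in F) && (f \in F))
      <= prob mu w (fun F => e \in F) * prob mu w (fun F => f \in F).

Definition size_increasing (mu : {set E} -> R) : Prop :=
  forall w, posw w -> forall e : E,
    expect mu w (fun F => #|F|%:R * (e \in F)%:R)
      > expect mu w (fun F => #|F|%:R) * prob mu w (fun F => e \in F).

Definition cavity_monotone (mu : {set E} -> R) : Prop :=
  0 < mu set0 /\ rayleigh mu /\ size_increasing mu.

End Measures.

Definition log_concave (R : rcfType) (m : nat) (c : nat -> R) : Prop :=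
  forall k : nat, (0 < k)%N -> (k < m)%N -> c k.-1 * c k.+1 <= c k ^+ 2.

Definition support_interval_01 (R : rcfType) (m : nat) (c : nat -> R) : Prop :=
  0 < c 0%N /\ 0 < c 1%N /\
  forall i j k : nat, (i <= j)%N -> (j <= k)%N -> (k <= m)%N ->
    0 < c i -> 0 < c k -> 0 < c j.

From HB Require Import structures.
From mathcomp Require Import all_boot all_order all_algebra.
From mathcomp Require Import ring lra zify.
From Stdlib Require Import FunctionalExtensionality.
Import Order.TTheory GRing.Theory Num.Theory.
Set Implicit Arguments. Unset Strict Implicit. Unset Printing Implicit Defensive.
Local Open Scope ring_scope.

(* Split every sum over F \subset E according to F \cap {e, f}.  For mu F = c |F|
   and positive weights w, the Rayleigh inequality for e != f becomes
   D_0 D_2 <= D_1^2 with D_s = shiftZ c w (E \ {e, f}) s, the partition function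
   of G |-> c (|G| + s) over the subsets G of E \ {e, f}; the size-increasing
   inequality at e becomes the positivity of the size defect of c on E \ {e}.

   Sufficiency: adding an element of weight y maps D_s to D_s + y D_(s+1).  This
   preserves the ratio form u_i u_(j+2) <= u_(i+1) u_(j+1) (i <= j) of
   log-concavity, which for c is equivalent to (1) and (2), and it can only
   increase the size defect, which starts at c(0) c(1) > 0.

   Necessity: letting the weight of an element tend to 0 or to infinity deletes
   it or contracts it, the latter shifting c by one, so D_0 D_2 <= D_1^2 passes
   to every shift of c on every smaller ground set.  On the empty set this is
   log-concavity of c, and with unit weights on a set of size g - 2 it rules out
   a gap of length g in the support.  Finally, if c(1) = 0 the support is {0},
   and both sides of the size-increasing inequality vanish. *)

Section Exchangeable.
Variables (R : rcfType) (E : finType).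
Implicit Types (V G : {set E}) (x : E) (u c : nat -> R) (w : E -> R).

Lemma weightU1 w x G : x \notin G -> weight w (x |: G) = w x * weight w G.
Proof. by move=> xG; rewrite /weight big_setU1. Qed.

Lemma weight_gt0 w V G : {in V, forall x, 0 < w x} -> G \subset V -> 0 < weight w G.
Proof. by move=> w_gt0 /subsetP GV; apply: prodr_gt0 => x /GV /w_gt0. Qed.

Lemma sum_subsetD1 V x (g : {set E} -> R) : x \in V ->
  \sum_(G : {set E} | G \subset V) g G =
  \sum_(G : {set E} | G \subset V :\ x) (g G + g (x |: G)).
Proof.
move=> xV; rewrite big_split (bigID (fun G : {set E} => x \in G)) /= addrC.
congr (_ + _); first by apply: eq_bigl => G; rewrite subsetD1.
rewrite (reindex_onto (fun G => x |: G) (fun G => G :\ x)) /=; last first.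
  by move=> G /andP[_ xG]; rewrite setD1K.
apply: eq_bigl => G; rewrite setU11 andbT; apply/idP/idP.
  case/andP=> GV /eqP <-; rewrite subsetD1 setD11 andbT.
  exact: subset_trans (subD1set _ _) GV.
by rewrite subsetD1 => /andP[GV xG]; rewrite setU1K // eqxx andbT subUset sub1set xV GV.
Qed.

Lemma sumr_subset_memE V x (g : {set E} -> R) :
  \sum_(F : {set E} | F \subset V) (x \in F)%:R * g F =
  \sum_(F : {set E} | F \subset V) g F - \sum_(F : {set E} | F \subset V :\ x) g F.
Proof.
rewrite (bigID (fun F : {set E} => x \in F)) [in RHS](bigID (fun F : {set E} => x \in F)) /=.
rewrite [X in _ + X]big1 => [|F /andP[_ /negbTE ->]]; last by rewrite mul0r.
have -> : \sum_(F : {set E} | (F \subset V) && (x \notin F)) g F =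
          \sum_(F : {set E} | F \subset V :\ x) g F.
  by apply: eq_bigl => F; rewrite subsetD1.
by rewrite addr0 addrK; apply: eq_bigr => F /andP[_ ->]; rewrite mul1r.
Qed.

Definition shiftZ u w V s : R :=
  \sum_(G : {set E} | G \subset V) u (#|G| + s)%N * weight w G.

Definition shiftN u w V s : R :=
  \sum_(G : {set E} | G \subset V) #|G|%:R * u (#|G| + s)%N * weight w G.

Lemma shiftZ_termU1 u w x G s : x \notin G ->
  u (#|x |: G| + s)%N * weight w (x |: G) = w x * (u (#|G| + s.+1)%N * weight w G).
Proof. by move=> xG; rewrite weightU1 // cardsU1 xG add1n addSnnS mulrCA. Qed.

Lemma shiftN_termU1 u w x G s : x \notin G ->
  #|x |: G|%:R * u (#|x |: G| + s)%N * weight w (x |: G) =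
  w x * (#|G|%:R * u (#|G| + s.+1)%N * weight w G + u (#|G| + s.+1)%N * weight w G).
Proof.
move=> xG; rewrite -mulrA shiftZ_termU1 // cardsU1 xG add1n -natr1; ring.
Qed.

Lemma shiftZD1 u w V x s : x \in V ->
  shiftZ u w V s = shiftZ u w (V :\ x) s + w x * shiftZ u w (V :\ x) s.+1.
Proof.
move=> xV; rewrite /shiftZ (sum_subsetD1 _ xV) big_split mulr_sumr /=.
congr (_ + _); apply: eq_bigr => G; rewrite subsetD1 => /andP[_ xG].
exact: shiftZ_termU1.
Qed.

Lemma shiftND1 u w V x s : x \in V ->
  shiftN u w V s =
  shiftN u w (V :\ x) s + w x * (shiftN u w (V :\ x) s.+1 + shiftZ u w (V :\ x) s.+1).
Proof.
move=> xV; rewrite /shiftN /shiftZ -big_split mulr_sumr (sum_subsetD1 _ xV) big_split /=.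
congr (_ + _); apply: eq_bigr => G; rewrite subsetD1 => /andP[_ xG].
exact: shiftN_termU1.
Qed.

Lemma shiftZ_set0 u w s : shiftZ u w set0 s = u s.
Proof.
by rewrite /shiftZ (big_pred1 set0) => [|G]; rewrite ?subset0 // cards0 /weight big_set0 mulr1.
Qed.

Lemma shiftN_set0 u w s : shiftN u w set0 s = 0.
Proof.
by rewrite /shiftN (big_pred1 set0) => [|G]; rewrite ?subset0 // cards0 !mul0r.
Qed.

Lemma shiftZ_ge u w V G s : (forall n, 0 <= u n) -> {in V, forall x, 0 < w x} ->
  G \subset V -> u (#|G| + s)%N * weight w G <= shiftZ u w V s.
Proof.
move=> u_ge0 w_gt0 GV; rewrite /shiftZ (bigD1 G) //= lerDl.
by apply: sumr_ge0 => H /andP[HV _]; rewrite mulr_ge0 // ltW // (weight_gt0 w_gt0).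
Qed.

Lemma eq_shiftZ_weight u w w' V s : {in V, w =1 w'} -> shiftZ u w V s = shiftZ u w' V s.
Proof.
move=> ww'; apply: eq_bigr => G /subsetP GV; congr (_ * _).
by apply: eq_bigr => x /GV /ww'.
Qed.

Lemma shiftZS u w V s : shiftZ (fun n => u n.+1) w V s = shiftZ u w V s.+1.
Proof. by apply: eq_bigr => G _; rewrite addnS. Qed.

Definition reweight w x (y : R) : E -> R := fun z => if z == x then y else w z.

Lemma reweight_gt0 w V x y : {in V :\ x, forall z, 0 < w z} -> 0 < y ->
  {in V, forall z, 0 < reweight w x y z}.
Proof.
move=> w_gt0 y_gt0 z zV; rewrite /reweight; case: eqVneq => // zx.
by apply: w_gt0; rewrite in_setD1 zx.
Qed.

Lemma shiftZ_reweight u w V x y s : x \in V ->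
  shiftZ u (reweight w x y) V s = shiftZ u w (V :\ x) s + y * shiftZ u w (V :\ x) s.+1.
Proof.
move=> xV; rewrite (shiftZD1 _ _ _ xV) {2}/reweight eqxx.
by rewrite !(@eq_shiftZ_weight u _ w) // => z; rewrite in_setD1 /reweight => /andP[/negbTE ->].
Qed.

Lemma quadratic_gt0_near0 (a b c : R) : 0 < a -> exists2 e : R, 0 < e & 0 < a + e * b + e * e * c.
Proof.
move=> a_gt0; set K := `|b| + `|c|.
have K_ge0 : 0 <= K by rewrite addr_ge0.
have aK_gt0 : 0 < a + K by rewrite ltr_wpDr.
exists (a / (a + K)); first by rewrite divr_gt0.
set e := a / (a + K).
have e_gt0 : 0 < e by rewrite divr_gt0.
have e_le1 : e <= 1 by rewrite ler_pdivrMr // mul1r lerDl.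
have eK : e * K < a by rewrite mulrAC ltr_pdivrMr // ltr_pM2l // ltrDr.
have eN y : - (e * `|y|) <= e * y.
  by rewrite -mulrN; apply: ler_wpM2l; [exact: ltW | exact: lerNnormlW].
have ec : - (e * `|c|) <= e * e * c.
  rewrite -mulrA -mulrN; apply: ler_wpM2l; first exact: ltW.
  apply: le_trans (eN c); rewrite lerN2 -[leRHS]mul1r; exact: ler_wpM2r.
have := eN b; rewrite /K mulrDr in eK; lra.
Qed.

Lemma ler_limit_quadratic (a b c d p q : R) :
  (forall e, 0 < e -> (a + e * b) * (c + e * d) <= (p + e * q) ^+ 2) ->
  a * c <= p ^+ 2.
Proof.
move=> le_e; rewrite leNgt; apply/negP; rewrite -subr_gt0 => /quadratic_gt0_near0.
move=> /(_ (a * d + b * c - 2 * p * q) (b * d - q ^+ 2))[e e_gt0].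
have := le_e e e_gt0; rewrite -subr_ge0 => + gt0.
suff -> : (p + e * q) ^+ 2 - (a + e * b) * (c + e * d) =
  - (a * c - p ^+ 2 + e * (a * d + b * c - 2 * p * q) + e * e * (b * d - q ^+ 2)).
  by rewrite oppr_ge0 leNgt gt0.
ring.
Qed.

Definition shiftZ_lc u V : Prop :=
  forall w, {in V, forall x, 0 < w x} ->
    shiftZ u w V 0 * shiftZ u w V 2 <= shiftZ u w V 1 ^+ 2.

Lemma shiftZ_lc_delete u V x : x \in V -> shiftZ_lc u V -> shiftZ_lc u (V :\ x).
Proof.
move=> xV lcV w w_gt0; set D := shiftZ u w (V :\ x).
apply: (ler_limit_quadratic (b := D 1%N) (d := D 3%N) (q := D 2%N)) => e e_gt0.
by have := lcV _ (reweight_gt0 w_gt0 e_gt0); rewrite !shiftZ_reweight.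
Qed.

Lemma shiftZ_lc_contract u V x : x \in V -> shiftZ_lc u V ->
  shiftZ_lc (fun n => u n.+1) (V :\ x).
Proof.
move=> xV lcV w w_gt0; rewrite !shiftZS; set D := shiftZ u w (V :\ x).
apply: (ler_limit_quadratic (b := D 0%N) (d := D 2%N) (q := D 1%N)) => e e_gt0.
(* x gets weight 1/e; after scaling by e^2, e -> 0 contracts x. *)
have ie_gt0 : 0 < e^-1 by rewrite invr_gt0.
have := lcV _ (reweight_gt0 w_gt0 ie_gt0); rewrite !shiftZ_reweight // -/D.
have e_neq0 : e != 0 by rewrite gt_eqF.
have e2_gt0 : 0 < e ^+ 2 by rewrite exprn_gt0.
rewrite -(ler_pM2l e2_gt0).
have -> : e ^+ 2 * ((D 0%N + e^-1 * D 1%N) * (D 2%N + e^-1 * D 3%N)) =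
  (D 1%N + e * D 0%N) * (D 3%N + e * D 2%N) by field.
by have -> : e ^+ 2 * (D 1%N + e^-1 * D 2%N) ^+ 2 = (D 2%N + e * D 1%N) ^+ 2 by field.
Qed.

Lemma shiftZ_lc_deleteN u V q : shiftZ_lc u V -> (q <= #|V|)%N ->
  exists2 V' : {set E}, #|V'| = (#|V| - q)%N & shiftZ_lc u V'.
Proof.
elim: q V => [|q IH] V lcV qV; first by exists V; rewrite ?subn0.
have /card_gt0P[x xV] : (0 < #|V|)%N by lia.
have cardV : #|V| = #|V :\ x|.+1 by rewrite (cardsD1 x V) xV.
have [|V' cardV' lcV'] := IH _ (shiftZ_lc_delete xV lcV); first by lia.
by exists V'; rewrite // cardV' cardV subSS.
Qed.

Lemma shiftZ_lc_minor u V p q : shiftZ_lc u V -> (p + q <= #|V|)%N ->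
  exists2 V' : {set E}, #|V'| = (#|V| - (p + q))%N & shiftZ_lc (fun n => u (p + n)%N) V'.
Proof.
elim: p u V => [|p IH] u V lcV pqV; first exact: shiftZ_lc_deleteN.
have /card_gt0P[x xV] : (0 < #|V|)%N by lia.
have cardV : #|V| = #|V :\ x|.+1 by rewrite (cardsD1 x V) xV.
have [|V' cardV' lcV'] := IH _ _ (shiftZ_lc_contract xV lcV); first by lia.
by exists V'; first by rewrite cardV' cardV addSn subSS.
Qed.

Lemma shiftZ_lc_set0 u : shiftZ_lc u set0 -> u 0%N * u 2%N <= u 1%N ^+ 2.
Proof. by move/(_ (fun _ => 1) (fun _ _ => ltr01)); rewrite !shiftZ_set0. Qed.

Lemma shiftZ_lc_log_concave u V k : shiftZ_lc u V -> (0 < k <= #|V|.+1)%N ->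
  u k.-1 * u k.+1 <= u k ^+ 2.
Proof.
case: k => // k lcV kV.
have [|V' cardV' lcV'] := @shiftZ_lc_minor u V k (#|V| - k) lcV; first by lia.
have V'0 : V' = set0 by apply/eqP; rewrite -cards_eq0 cardV'; lia.
by move: lcV'; rewrite V'0 => /shiftZ_lc_set0; rewrite addn0 addn1 addn2.
Qed.

Lemma shiftZ_lc_gap u V i k : shiftZ_lc u V -> (forall n, 0 <= u n) ->
  (i.+1 < k <= #|V| + 2)%N -> 0 < u i -> 0 < u k ->
  exists2 t, (i < t < k)%N & 0 < u t.
Proof.
move=> lcV u_ge0 ikV ui uk.
case: (pickP (fun t : 'I_k => (i < t)%N && (0 < u t))) => [t /andP[it ut] | no_pos].
  by exists t; rewrite ?it ?ltn_ord.
have [|W cardW lcW] := shiftZ_lc_minor (p := i) (q := (#|V| + 2 - k)%N) lcV; first by lia.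
(* With unit weights on W, #|W| = k - i - 2, so D_1 only sees the zeros in the gap. *)
have := lcW (fun _ => 1) (fun _ _ => ltr01).
have weight1 G : weight (fun _ => 1 : R) G = 1 by rewrite /weight big1.
have -> : shiftZ (fun n => u (i + n)%N) (fun _ => 1) W 1 = 0.
  apply: big1 => G /subset_leq_card GW; rewrite weight1 mulr1.
  have tk : (i + (#|G| + 1) < k)%N by lia.
  have /negbT := no_pos (Ordinal tk); rewrite /= negb_and -leNgt.
  by case/orP=> [|u_le0]; [lia | apply/le_anti; rewrite u_le0 u_ge0].
have ge_term G s : G \subset W ->
    u (i + (#|G| + s))%N <= shiftZ (fun n => u (i + n)%N) (fun _ => 1) W s.
  move=> GW; rewrite -[leLHS]mulr1 -[X in _ * X <= _](weight1 G).
  exact: (@shiftZ_ge (fun n => u (i + n)%N) _ W G s (fun n => u_ge0 _) (fun _ _ => ltr01) GW).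
rewrite expr2 mul0r leNgt mulr_gt0 //.
  by apply: (lt_le_trans _ (ge_term _ 0%N (sub0set W))); rewrite cards0 !addn0.
apply: (lt_le_trans _ (ge_term _ 2%N (subxx W))).
by rewrite cardW (_ : _ + _ = k)%N //; lia.
Qed.

Lemma shiftZ_lc_interval u V i j k : shiftZ_lc u V -> (forall n, 0 <= u n) ->
  (i <= j <= k)%N -> (k <= #|V| + 2)%N -> 0 < u i -> 0 < u k -> 0 < u j.
Proof.
move=> lcV u_ge0; have [n] := ubnP (k - i)%N; elim: n i j k => // n IH i j k.
move=> kin ijk kV ui uk; have [<- //|ij] := eqVneq i j.
have [-> //|jk] := eqVneq j k.
have [|t itk ut] := shiftZ_lc_gap lcV u_ge0 _ ui uk; first by lia.
case: (ltngtP t j) => [tj|jt|<- //].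
  by apply: (IH t j k) => //; lia.
by apply: (IH i j t) => //; lia.
Qed.

Definition pairwise_lc u : Prop :=
  forall i j : nat, (i <= j)%N -> u i * u j.+2 <= u i.+1 * u j.+1.

Lemma pairwise_lc_step u (y : R) : pairwise_lc u -> 0 <= y ->
  pairwise_lc (fun s => u s + y * u s.+1).
Proof.
move=> lc_u y_ge0 i j ij.
have mid : u i * u j.+3 <= u i.+2 * u j.+1.
  move: ij; rewrite leq_eqVlt => /orP[/eqP <-|ij]; first by rewrite [u i.+2 * _]mulrC lc_u.
  exact: le_trans (lc_u i j.+1 (leqW (ltnW ij))) (lc_u i.+1 j ij).
have -> : (u i + y * u i.+1) * (u j.+2 + y * u j.+3) =
  u i * u j.+2 + y * (u i * u j.+3 + u i.+1 * u j.+2) + y * y * (u i.+1 * u j.+3) by ring.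
have -> : (u i.+1 + y * u i.+2) * (u j.+1 + y * u j.+2) =
  u i.+1 * u j.+1 + y * (u i.+2 * u j.+1 + u i.+1 * u j.+2) + y * y * (u i.+2 * u j.+2) by ring.
apply: lerD; first apply: lerD.
- exact: lc_u.
- by apply: ler_wpM2l; rewrite ?lerD2r.
- by apply: ler_wpM2l; [exact: mulr_ge0 | exact: lc_u].
Qed.

Lemma pairwise_lc_shiftZ u w V : pairwise_lc u -> {in V, forall x, 0 < w x} ->
  pairwise_lc (shiftZ u w V).
Proof.
move=> lc_u; have [n] := ubnP #|V|; elim: n V => // n IH V Vn w_gt0.
have [->|[x xV]] := set_0Vmem V.
  by move=> i j ij; rewrite !shiftZ_set0 lc_u.
have w'_gt0 : {in V :\ x, forall z, 0 < w z}.
  by move=> z; rewrite in_setD1 => /andP[_ /w_gt0].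
have V'n : (#|V :\ x| < n)%N by move: Vn; rewrite (cardsD1 x) xV.
move=> i j ij; rewrite !(shiftZD1 _ _ _ xV).
exact: (pairwise_lc_step (IH _ V'n w'_gt0) (ltW (w_gt0 _ xV))).
Qed.

Lemma log_concave_pairwise_pos m u : log_concave m u -> forall d i,
  ((i + d).+2 <= m)%N -> (forall t, (i <= t <= (i + d).+2)%N -> 0 < u t) ->
  u i * u (i + d).+2 <= u i.+1 * u (i + d).+1.
Proof.
move=> lc_u; elim=> [|d IH] i dm u_gt0.
  by rewrite addn0 -expr2 (lc_u i.+1) //; rewrite addn0 in dm.
rewrite addnS in dm u_gt0 *.
have lc_d := lc_u (i + d).+2 isT dm; rewrite /= expr2 in lc_d.
have run_d := IH i (ltnW dm) (fun t it => u_gt0 t ltac:(lia)).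
have u1 := u_gt0 (i + d).+1 ltac:(lia); have u2 := u_gt0 (i + d).+2 ltac:(lia).
have u0 := ltW (u_gt0 i ltac:(lia)); have u3 := ltW (u_gt0 (i + d).+3 ltac:(lia)).
rewrite -(ler_pM2r (mulr_gt0 u1 u2)).
have -> : u i * u (i + d).+3 * (u (i + d).+1 * u (i + d).+2) =
  (u i * u (i + d).+2) * (u (i + d).+1 * u (i + d).+3) by ring.
have -> : u i.+1 * u (i + d).+2 * (u (i + d).+1 * u (i + d).+2) =
  (u i.+1 * u (i + d).+1) * (u (i + d).+2 * u (i + d).+2) by ring.
by apply: ler_pM => //; apply: mulr_ge0 => //; apply: ltW.
Qed.

Lemma pairwise_lc_of_log_concave m u : (forall n, 0 <= u n) ->
  (forall n, (m < n)%N -> u n = 0) -> log_concave m u -> support_interval_01 m u ->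
  pairwise_lc u.
Proof.
move=> u_ge0 u_out lc_u [_ [_ supp]] i j ij.
have eq0 n : ~~ (0 < u n) -> u n = 0.
  by move=> un; apply/le_anti; rewrite u_ge0 andbT leNgt.
have [ui|/eq0 ->] := boolP (0 < u i); last by rewrite mul0r mulr_ge0.
have [uj|/eq0 ->] := boolP (0 < u j.+2); last by rewrite mulr0 mulr_ge0.
have jm : (j.+2 <= m)%N.
  by rewrite leqNgt; apply/negP => /u_out uj0; rewrite uj0 ltxx in uj.
rewrite -(subnKC ij); apply: (log_concave_pairwise_pos lc_u); rewrite subnKC //.
by move=> t /andP[it tj]; apply: (supp i t j.+2).
Qed.

(* Z_s Z_(s+k) times the mean size at shift s + k minus the mean size at
   shift s plus k, where Z_s := shiftZ u w V s. *)
Definition size_defect u w V k s : R :=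
  shiftZ u w V s * shiftN u w V (s + k) - shiftN u w V s * shiftZ u w V (s + k)
  + k%:R * (shiftZ u w V s * shiftZ u w V (s + k)).

Lemma size_defect0 u w V s : size_defect u w V 0 s = 0.
Proof. by rewrite /size_defect addn0 mul0r addr0 mulrC subrr. Qed.

Lemma size_defectD1 u w V x k s : x \in V ->
  size_defect u w V k.+1 s = size_defect u w (V :\ x) k.+1 s
    + w x * (size_defect u w (V :\ x) k.+2 s + size_defect u w (V :\ x) k s.+1)
    + w x ^+ 2 * size_defect u w (V :\ x) k.+1 s.+1.
Proof.
move=> xV; rewrite /size_defect !(shiftZD1 _ _ _ xV) !(shiftND1 _ _ _ xV).
rewrite !addSn !addnS -!natr1; ring.
Qed.

Lemma size_defect_ge u w V : (forall n, 0 <= u n) -> {in V, forall x, 0 < w x} ->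
  (forall k s, 0 <= size_defect u w V k s) /\ u 0%N * u 1%N <= size_defect u w V 1 0.
Proof.
move=> u_ge0; have [n] := ubnP #|V|; elim: n V => // n IH V Vn w_gt0.
have [->|[x xV]] := set_0Vmem V.
  split=> [k s|]; rewrite /size_defect !shiftZ_set0 !shiftN_set0 mulr0 mul0r subrr add0r.
    by rewrite !mulr_ge0.
  by rewrite mul1r.
have w'_gt0 : {in V :\ x, forall z, 0 < w z}.
  by move=> z; rewrite in_setD1 => /andP[_ /w_gt0].
have V'n : (#|V :\ x| < n)%N by move: Vn; rewrite (cardsD1 x) xV.
have [ge0' base'] := IH _ V'n w'_gt0.
have wx := ltW (w_gt0 _ xV).
have monotone k s : size_defect u w (V :\ x) k.+1 s <= size_defect u w V k.+1 s.
  rewrite (size_defectD1 _ _ _ _ xV) -addrA lerDl.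
  apply: addr_ge0; apply: mulr_ge0; rewrite ?exprn_ge0 ?ge0' //.
  exact: addr_ge0 (ge0' _ _) (ge0' _ _).
split; last exact: le_trans base' (monotone _ _).
by case=> [|k] s; rewrite ?size_defect0 // (le_trans _ (monotone _ _)).
Qed.

Lemma ler_ratio_prod (a b d Z : R) : 0 < Z -> (a / Z <= b / Z * (d / Z)) = (a * Z <= b * d).
Proof. by move=> Z_gt0; rewrite mulf_div ler_pdivlMr ?mulr_gt0 // mulrA divfK ?gt_eqF. Qed.

Lemma ltr_ratio_prod (a b d Z : R) : 0 < Z -> (b / Z * (d / Z) < a / Z) = (b * d < a * Z).
Proof. by move=> Z_gt0; rewrite mulf_div ltr_pdivrMr ?mulr_gt0 // mulrA divfK ?gt_eqF. Qed.

Section CardinalityMeasure.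
Variables (c : nat -> R) (w : E -> R).
Local Notation mu := (fun F : {set E} => c #|F|).
Local Notation T := [set: E].

Lemma partZ_shiftZ : partZ mu w = shiftZ c w T 0.
Proof. by apply: eq_big => [F|F _]; rewrite ?subsetT ?addn0. Qed.

Lemma sum_mem_shiftZ x :
  \sum_(F : {set E} | x \in F) mu F * weight w F = shiftZ c w T 0 - shiftZ c w (T :\ x) 0.
Proof.
transitivity (\sum_(F : {set E} | F \subset T) (x \in F)%:R * (c (#|F| + 0)%N * weight w F)).
  rewrite big_mkcond; apply: eq_big => [F|F _]; rewrite ?subsetT // addn0.
  by case: (x \in F); rewrite ?mul1r ?mul0r.
by rewrite sumr_subset_memE.
Qed.

Lemma sum_mem2_shiftZ x y :
  \sum_(F : {set E} | (x \in F) && (y \in F)) mu F * weight w F =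
  shiftZ c w T 0 - shiftZ c w (T :\ y) 0 - (shiftZ c w (T :\ x) 0 - shiftZ c w (T :\ x :\ y) 0).
Proof.
transitivity (\sum_(F : {set E} | F \subset T)
  (x \in F)%:R * ((y \in F)%:R * (c (#|F| + 0)%N * weight w F))).
  rewrite big_mkcond; apply: eq_big => [F|F _]; rewrite ?subsetT // addn0.
  by case: (x \in F); case: (y \in F); rewrite ?mul1r ?mul0r.
by rewrite !sumr_subset_memE.
Qed.

Lemma sum_card_shiftN : \sum_(F : {set E}) mu F * weight w F * #|F|%:R = shiftN c w T 0.
Proof. by apply: eq_big => [F|F _]; rewrite ?subsetT // addn0 mulrC mulrA. Qed.

Lemma sum_card_mem_shiftN x :
  \sum_(F : {set E}) mu F * weight w F * (#|F|%:R * (x \in F)%:R) =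
  shiftN c w T 0 - shiftN c w (T :\ x) 0.
Proof.
transitivity (\sum_(F : {set E} | F \subset T)
  (x \in F)%:R * (#|F|%:R * c (#|F| + 0)%N * weight w F)).
  apply: eq_big => [F|F _]; rewrite ?subsetT // addn0; ring.
by rewrite sumr_subset_memE.
Qed.

Lemma rayleigh_pairP e f : e != f -> posw w -> 0 < partZ mu w ->
  (prob mu w (fun F => (e \in F) && (f \in F))
      <= prob mu w (fun F => e \in F) * prob mu w (fun F => f \in F)) <->
  (let D := shiftZ c w (T :\ e :\ f) in D 0%N * D 2%N <= D 1%N ^+ 2).
Proof.
move=> ef w_gt0 Z_gt0; rewrite /prob ler_ratio_prod // partZ_shiftZ.
rewrite sum_mem2_shiftZ !sum_mem_shiftZ /=; set D := shiftZ c w (T :\ e :\ f).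
have fTe : f \in T :\ e by rewrite in_setD1 in_setT eq_sym ef.
have eTf : e \in T :\ f by rewrite in_setD1 in_setT ef.
have TfeE : T :\ f :\ e = T :\ e :\ f by apply/setP => z; rewrite !in_setD1 andbCA.
have DTe s : shiftZ c w (T :\ e) s = D s + w f * D s.+1 by rewrite (shiftZD1 _ _ _ fTe).
have DTf s : shiftZ c w (T :\ f) s = D s + w e * D s.+1.
  by rewrite (shiftZD1 _ _ _ eTf) TfeE.
rewrite !(shiftZD1 _ _ _ (in_setT e)) !DTe DTf -subr_ge0.
set lhs := (X in 0 <= X); have -> : lhs = w e * w f * (D 1%N ^+ 2 - D 0%N * D 2%N).
  by rewrite /lhs; ring.
by rewrite pmulr_rge0 ?mulr_gt0 // subr_ge0.
Qed.

Lemma size_increasing_atP e : posw w -> 0 < partZ mu w ->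
  (expect mu w (fun F => #|F|%:R * (e \in F)%:R)
     > expect mu w (fun F => #|F|%:R) * prob mu w (fun F => e \in F)) <->
  0 < size_defect c w (T :\ e) 1 0.
Proof.
move=> w_gt0 Z_gt0; rewrite /expect /prob ltr_ratio_prod // partZ_shiftZ.
rewrite sum_card_mem_shiftN sum_card_shiftN sum_mem_shiftZ.
rewrite (shiftND1 _ _ _ (in_setT e)) !(shiftZD1 _ _ _ (in_setT e)) -subr_gt0.
set lhs := (X in 0 < X); have -> : lhs = w e * size_defect c w (T :\ e) 1 0.
  by rewrite /lhs /size_defect add0n; ring.
by rewrite pmulr_rgt0.
Qed.

End CardinalityMeasure.

Lemma partZ_gt0 c w : (forall n, 0 <= c n) -> 0 < c 0%N -> posw w ->
  0 < partZ (fun F : {set E} => c #|F|) w.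
Proof.
move=> c_ge0 c0 w_gt0; rewrite partZ_shiftZ.
apply: (lt_le_trans _ (shiftZ_ge _ c_ge0 (fun x _ => w_gt0 x) (sub0set [set: E]))).
by rewrite cards0 /weight big_set0 mulr1.
Qed.

Lemma shiftZ_lc_of_rayleigh c e f : (forall n, 0 <= c n) -> 0 < c 0%N -> e != f ->
  rayleigh (fun F : {set E} => c #|F|) -> shiftZ_lc c ([set: E] :\ e :\ f).
Proof.
move=> c_ge0 c0 ef ray w' w'_gt0.
pose w z := if z \in [set: E] :\ e :\ f then w' z else 1.
have w_gt0 : posw w by move=> z; rewrite /w; case: ifP => [/w'_gt0|_] //; exact: ltr01.
have := ray w w_gt0 e f ef; rewrite rayleigh_pairP //; last exact: partZ_gt0.
by rewrite /= !(@eq_shiftZ_weight c w w') // => z zW; rewrite /w zW.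
Qed.

Lemma card_setTD2 (e f : E) : e != f -> #|[set: E] :\ e :\ f| = (#|E| - 2)%N.
Proof.
move=> ef; have := cardsD1 e [set: E]; have := cardsD1 f ([set: E] :\ e).
by rewrite cardsT !in_setD1 !in_setT eq_sym ef /=; lia.
Qed.

Lemma not_size_increasing_point c : (0 < #|E|)%N -> (forall n, 0 <= c n) -> 0 < c 0%N ->
  (forall n, c n.+1 = 0) -> ~ size_increasing (fun F : {set E} => c #|F|).
Proof.
move=> E_gt0 c_ge0 c0 cS size.
have /card_gt0P[e _] : (0 < #|[set: E]|)%N by rewrite cardsT.
have w_gt0 : posw (fun _ : E => 1 : R) by move=> _; exact: ltr01.
have := size _ w_gt0 e; rewrite size_increasing_atP ?partZ_gt0 //.
have Z1 : shiftZ c (fun _ => 1) ([set: E] :\ e) 1 = 0.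
  by apply: big1 => G _; rewrite addn1 cS mul0r.
have N1 : shiftN c (fun _ => 1) ([set: E] :\ e) 1 = 0.
  by apply: big1 => G _; rewrite addn1 cS mulr0 mul0r.
by rewrite /size_defect add0n Z1 N1 !mulr0 subrr addr0 ltxx.
Qed.

Lemma cavity_monotone_card_lc c : (0 < #|E|)%N -> (forall n, 0 <= c n) ->
  (forall n, (#|E| < n)%N -> c n = 0) -> cavity_monotone (fun F : {set E} => c #|F|) ->
  log_concave #|E| c /\ support_interval_01 #|E| c.
Proof.
move=> E_gt0 c_ge0 c_out [mu0 [ray size]].
have c0 : 0 < c 0%N by rewrite cards0 in mu0.
have lc_pair : (1 < #|E|)%N ->
    exists2 V : {set E}, #|V| = (#|E| - 2)%N & shiftZ_lc c V.
  move=> E_gt1; have /card_gt1P[e [f [_ _ ef]]] : (1 < #|[set: E]|)%N by rewrite cardsT.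
  by exists ([set: E] :\ e :\ f); [exact: card_setTD2 | exact: shiftZ_lc_of_rayleigh].
have supp i j k : (i <= j <= k)%N -> (k <= #|E|)%N -> 0 < c i -> 0 < c k -> 0 < c j.
  move=> ijk kE ci ck; have [<- //|ij] := eqVneq i j; have [-> //|jk] := eqVneq j k.
  have [|V cardV lcV] := lc_pair; first by lia.
  by apply: (shiftZ_lc_interval lcV c_ge0 ijk) => //; lia.
have c1 : 0 < c 1%N.
  rewrite ltNge; apply/negP => c1_le0; apply: (not_size_increasing_point E_gt0 c_ge0 c0 _ size).
  move=> n; have [nE|/c_out //] := leqP n.+1 #|E|.
  apply/le_anti; rewrite c_ge0 andbT leNgt; apply/negP => cn.
  by have := supp 0%N 1%N n.+1 isT nE c0 cn; rewrite ltNge c1_le0.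
split.
  move=> k k_gt0 kE; have [|V cardV lcV] := lc_pair; first by lia.
  by apply: (shiftZ_lc_log_concave lcV); lia.
split=> //; split=> // i j k ij jk; apply: supp; by rewrite ij.
Qed.

Lemma cavity_monotone_card_of_lc c : (forall n, 0 <= c n) ->
  (forall n, (#|E| < n)%N -> c n = 0) -> log_concave #|E| c -> support_interval_01 #|E| c ->
  cavity_monotone (fun F : {set E} => c #|F|).
Proof.
move=> c_ge0 c_out lc supp; have [c0 [c1 _]] := supp.
have plc := pairwise_lc_of_log_concave c_ge0 c_out lc supp.
split; first by rewrite cards0.
split=> [w w_gt0 e f ef | w w_gt0 e].
  rewrite rayleigh_pairP ?partZ_gt0 //= expr2.
  exact: (pairwise_lc_shiftZ plc (fun x _ => w_gt0 x) (leqnn 0)).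
rewrite size_increasing_atP ?partZ_gt0 //.
have [_ base] := @size_defect_ge c w ([set: E] :\ e) c_ge0 (fun x _ => w_gt0 x).
exact: lt_le_trans (mulr_gt0 c0 c1) base.
Qed.

Lemma log_concave_eq m c c' : (forall n, (n <= m)%N -> c n = c' n) ->
  log_concave m c -> log_concave m c'.
Proof. by move=> cc' lc k k_gt0 km; rewrite -!cc' ?lc //; lia. Qed.

Lemma support_interval_01_eq m c c' : (0 < m)%N -> (forall n, (n <= m)%N -> c n = c' n) ->
  support_interval_01 m c -> support_interval_01 m c'.
Proof.
move=> m_gt0 cc' [c0 [c1 supp]]; rewrite /support_interval_01 -!cc' //.
split=> //; split=> // i j k ij jk km.
have jm : (j <= m)%N by lia.
have im : (i <= m)%N by lia.
by rewrite -!cc' //; apply: supp.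
Qed.

Lemma cavity_monotone_cardP c : (0 < #|E|)%N -> (forall k, (k <= #|E|)%N -> 0 <= c k) ->
  cavity_monotone (fun F : {set E} => c #|F|) <->
  log_concave #|E| c /\ support_interval_01 #|E| c.
Proof.
(* c is only observed on [0, #|E|]; its truncation is nonnegative everywhere
   and vanishes beyond #|E|, as the lemmas on sequences require. *)
move=> E_gt0 c_ge0; pose c' n := if (n <= #|E|)%N then c n else 0.
have cc' n : (n <= #|E|)%N -> c n = c' n by rewrite /c' => ->.
have c'c n : (n <= #|E|)%N -> c' n = c n by move/cc'.
have c'_ge0 n : 0 <= c' n by rewrite /c'; case: ifP => // /c_ge0.
have c'_out n : (#|E| < n)%N -> c' n = 0 by rewrite /c' ltnNge => /negbTE ->.
have -> : (fun F : {set E} => c #|F|) = (fun F => c' #|F|).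
  by apply: functional_extensionality => F; rewrite cc' ?max_card.
split=> [/(cavity_monotone_card_lc E_gt0 c'_ge0 c'_out)[lc supp] | [lc supp]].
  by split; [exact: log_concave_eq lc | exact: support_interval_01_eq supp].
by apply: cavity_monotone_card_of_lc => //;
  [exact: log_concave_eq lc | exact: support_interval_01_eq supp].
Qed.

End Exchangeable.

Theorem mainTheorem3 (R : rcfType) (E : finType) :
  (0 < #|E|)%N ->
  (forall c : nat -> R, (forall k : nat, (k <= #|E|)%N -> 0 <= c k) ->
     (cavity_monotone (fun F : {set E} => c #|F|) <->
      log_concave #|E| c /\ support_interval_01 #|E| c)) /\
  (forall b : nat, (1 <= b)%N ->
     cavity_monotone (fun F : {set E} => if (#|F| <= b)%N then (1 : R) else 0)).
Proof.
move=> E_gt0; split=> [c|b b_gt0]; first exact: cavity_monotone_cardP.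
pose c n : R := if (n <= b)%N then 1 else 0.
have c_ge0 k : (k <= #|E|)%N -> 0 <= c k by rewrite /c; case: ifP.
apply/(cavity_monotone_cardP E_gt0 c_ge0); rewrite /c.
split=> [k _ _ /=|].
  have [kb|bk] := leqP k b; last by rewrite (_ : (k.+1 <= b)%N = false) ?mulr0 ?sqr_ge0 //; lia.
  by rewrite (leq_trans (leq_pred k) kb) expr1n mul1r; case: ifP.
split; first by rewrite ltr01.
split; first by rewrite b_gt0 ltr01.
move=> i j k _ jk _ _; have [kb _|_] := leqP k b; first by rewrite (leq_trans jk kb) ltr01.
by rewrite ltxx.
Qed.
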